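(* Suppose that for each $r,k\in\mathbb{N}$ with $k\le r$, $\{Y^{(k)}_{r,i}:i\in\{1,\dots,k\}\}$ is a collection of independent random variables. Suppose there exist $\alpha\in(0,1]$, $c>0$, $r_0$ and $\theta_0$ such that for all $r,k\in\mathbb{N}$, $i\in\{1,\dots,k\}$ and $\theta\in\mathbb{R}$ with $r/k>r_0$ and $\theta>\theta_0$, $$\mathbb{P}\left(Y^{(k)}_{r,i}>\theta (r/k)^{1/3}\right)\le\exp(-c\theta^\alpha).$$ Finally, let $Y_r$ be a random variable such that $Y_r\le\sum_{i=1}^kY^{(k)}_{r,i}$ for every $k\in\mathbb{N}$ with $r/k>r_0$. Then there exist $\tilde\theta_0=\tilde\theta_0(c,\alpha,\theta_0,r_0)$ and $c'=c'(c,\alpha,\theta_0,r_0)>0$ such that for all $\tilde\theta_0<\theta<r^{2/3}$ and $r>r_0$, $$\mathbb{P}\left(Y_r>\theta r^{1/3}\right)\le\exp\left(-c'\theta^{3\alpha/2}\right).$$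
   Context: Convention: quantities such as $k$ and $r/k$ that are required to be integers are rounded down when expressed as real numbers. *)

From HB Require Import structures.
From mathcomp Require Import all_boot all_order all_algebra.
From mathcomp Require Import all_classical all_reals all_analysis.
Set Implicit Arguments. Unset Strict Implicit. Unset Printing Implicit Defensive.
Import Order.TTheory GRing.Theory Num.Theory.
Local Open Scope classical_set_scope.
Local Open Scope ring_scope.

(* Mutual independence of a finite family (X_i)_{i < n} of real random
   variables: for every family of Borel sets (B_i), the probability of the
   joint event is the product of the probabilities.  (Taking B_i = setT
   for i outside a subfamily recovers the product rule for subfamilies.) *)
Definition mutually_independent d (T : measurableType d) (R : realType)
  (P : probability T R) (n : nat) (X : 'I_n -> T -> R) : Prop :=
  forall B : 'I_n -> set R, (forall i, measurable (B i)) ->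
    P (\bigcap_(i in [set: 'I_n]) (X i @^-1` B i)) =
    (\prod_(i < n) P (X i @^-1` B i))%E.

From HB Require Import structures.
From mathcomp Require Import all_boot all_order all_algebra.
From mathcomp Require Import all_classical all_reals all_analysis.
From mathcomp Require Import ring lra zify.

(* Split [r] into [k ~ (theta / A)^(3/2)] blocks, so that [s = (r / k)^(1/3)] is
   the block scale and [Y_r > theta r^(1/3)] forces [sum_i Y_i > x s] with
   [x = theta k^(1/3)].  Round each [Y_i / s] up to the grid [u0 N]
   ([u0 = theta0 + 1]) and truncate it at [J u0 ~ x].  Exceeding the truncation
   costs [k exp (- c (J u0)^alpha)] by the union bound; below it, the
   stretched-exponential tails bound the exponential moment at rate
   [lam = c / 4 (J u0)^(alpha - 1)] by [1 + lam K], so independence and a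
   Chernoff bound give [exp (- lam x + lam K k)].  As [A k <= x] with
   [A >= 2 K], both terms are at most [exp (- c x^alpha / 8)]; the factor
   [k + 1 <= x] is absorbed once [x] is large, and [x >= theta^(3/2) / (2 sqrt A)]
   turns [exp (- c x^alpha / 16)] into [exp (- c' theta^(3 alpha / 2))]. *)

Set Implicit Arguments.
Unset Strict Implicit.
Unset Printing Implicit Defensive.

Import Order.TTheory GRing.Theory Num.Theory.
Local Open Scope classical_set_scope.
Local Open Scope ring_scope.

Section ElementaryBounds.
Variable R : realType.
Implicit Types a b c x y : R.

Lemma ln_le_id y : 0 < y -> ln y <= y.
Proof.
move=> y0; have := @le_ln1Dx R (y - 1) (ltac:(lra)).
by rewrite addrC subrK; lra.
Qed.

Lemma ln_le_powR b y : 0 < b -> 0 < y -> ln y <= y `^ b / b.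
Proof.
move=> b0 y0; rewrite ler_pdivlMr // mulrC -ln_powR.
by apply: ln_le_id; rewrite powR_gt0.
Qed.

Lemma powR_half_sqr a y : 0 <= y -> y `^ a = (y `^ (a / 2)) ^+ 2.
Proof.
move=> y0; rewrite -powR_mulrn ?powR_ge0 // -powRrM.
by congr (_ `^ _); rewrite mulr2n; field.
Qed.

Lemma powRB1_mul a y : 0 < y -> y `^ (a - 1) * y = y `^ a.
Proof.
move=> y0; rewrite -{2}(@powRr1 _ y) ?ltW //.
by rewrite -powRD ?subrK //; apply/implyP => _; apply: lt0r_neq0.
Qed.

Lemma le0_ger_powR b x y : 0 < x -> x <= y -> b <= 0 -> y `^ b <= x `^ b.
Proof.
move=> x0 xy b0; rewrite -[b]opprK [y `^ _]powRN [x `^ _]powRN.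
rewrite lef_pV2 ?posrE ?powR_gt0 //; try lra.
by apply: ge0_ler_powR; rewrite ?nnegrE; lra.
Qed.

Lemma expR_ge1 x : 0 <= x -> 1 <= expR x.
Proof. by move=> x0; have := expR_ge1Dx x; lra. Qed.

Lemma expR_sub1_le y : expR y - 1 <= y * expR y.
Proof.
have : (1 - y) * expR y <= expR (- y) * expR y.
  by rewrite ler_pM2r ?expR_gt0 // expR_ge1Dx.
by rewrite -expRD addNr expR0 mulrBl mul1r; lra.
Qed.

(* [18 / (a^2 c)] is the maximum of [v |-> 6 v / a - c v^2 / 2], with [v = y^(a/2)]. *)
Lemma mul_expR_stretch_le a c y : 0 < a -> 0 < c -> 0 < y ->
  y * expR (- (c / 2 * y `^ a)) <= expR (18 / (a ^+ 2 * c)) / y ^+ 2.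
Proof.
move=> a0 c0 y0; rewrite ler_pdivlMr ?exprn_gt0 // mulrAC -exprS.
have -> : y ^+ 3 = expR (3%:R * ln y) by rewrite expRM_natl lnK.
rewrite -expRD ler_expR (powR_half_sqr a (ltW y0)).
set v := y `^ (a / 2).
have ln_le : 3%:R * ln y <= 6 / a * v.
  rewrite (_ : 6 / a * v = 3%:R * (v / (a / 2))); last by field; lra.
  by rewrite ler_pM2l ?ltr0n //; apply: ln_le_powR; lra.
have sq : 18 / (a ^+ 2 * c) - (6 / a * v - c / 2 * v ^+ 2)
          = c / 2 * (v - 6 / (a * c)) ^+ 2.
  by field; apply/andP; split; apply/lt0r_neq0.
have : 0 <= c / 2 * (v - 6 / (a * c)) ^+ 2 by rewrite mulr_ge0 ?sqr_ge0 //; lra.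
lra.
Qed.

Lemma sum_inv_sqr_le2 n : \sum_(j < n) ((j.+1)%:R ^+ 2)^-1 <= 2 :> R.
Proof.
suff telescope : forall n, \sum_(j < n.+1) ((j.+1)%:R ^+ 2)^-1 <= 2 - (n.+1%:R)^-1 :> R.
  case: n => [|n]; first by rewrite big_ord0; lra.
  by apply: le_trans (telescope n) _; rewrite gerBl invr_ge0.
elim=> [|i IH]; first by rewrite big_ord1 expr1n invr1; lra.
rewrite big_ord_recr /=; set m : R := i.+1%:R in IH *.
have m1 : 1 <= m by rewrite ler1n.
have -> : (i.+2%:R : R) = m + 1 by rewrite -natr1.
suff step : ((m + 1) ^+ 2)^-1 <= m^-1 - (m + 1)^-1.
  by apply: le_trans (lerD IH step) _; rewrite addrA subrK.
have -> : m^-1 - (m + 1)^-1 = (m * (m + 1))^-1.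
  by field; apply/andP; split; apply/lt0r_neq0; lra.
rewrite lef_pV2 ?posrE ?exprn_gt0 ?mulr_gt0 ?expr2 ?ler_pM2r //; lra.
Qed.

End ElementaryBounds.

Section ExponentialMoments.
Variable R : realType.
Implicit Types a c lam p x y z w : R.

Lemma level_mgf_term_le a c (u0 : R) lam p (m : nat) :
  0 < a -> 0 < c -> 1 <= u0 -> 0 <= lam -> (0 < m)%N -> 0 <= p ->
  p <= expR (- (c * (m%:R * u0) `^ a)) ->
  lam * (m.+1%:R * u0) <= c / 2 * (m%:R * u0) `^ a ->
  p * (expR (lam * (m.+1%:R * u0)) - 1) <=
    2 * lam * expR (18 / (a ^+ 2 * c)) / m%:R ^+ 2.
Proof.
move=> a0 c0 u1 lam0 m0 p0; set y := m%:R * u0; set w := m.+1%:R * u0.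
move=> p_le lamw_le.
have m1 : 1 <= m%:R :> R by rewrite ler1n.
have m_le_y : m%:R <= y by rewrite ler_peMr //; lra.
have w0 : 0 <= w by rewrite mulr_ge0 //; lra.
have w_le : w <= 2 * y.
  by rewrite mulrA; apply: ler_wpM2r; [lra | rewrite -natrM ler_nat; lia].
set E := expR (- (c / 2 * y `^ a)).
have step1 : p * (expR (lam * w) - 1) <=
             expR (- (c * y `^ a)) * (lam * w * expR (lam * w)).
  apply: le_trans (ler_wpM2l p0 (expR_sub1_le _)) _.
  apply: ler_wpM2r p_le.
  exact: mulr_ge0 (mulr_ge0 lam0 w0) (expR_ge0 _).
have step2 : expR (- (c * y `^ a)) * (lam * w * expR (lam * w)) <= lam * w * E.
  rewrite mulrCA -expRD; apply: ler_wpM2l; first exact: mulr_ge0.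
  by rewrite ler_expR; lra.
have step3 : lam * w * E <= 2 * lam * (y * E).
  rewrite (_ : 2 * lam * (y * E) = lam * (2 * y) * E); last by ring.
  by rewrite ler_wpM2r ?expR_ge0 ?ler_wpM2l.
have step4 : y * E <= expR (18 / (a ^+ 2 * c)) / m%:R ^+ 2.
  apply: le_trans (mul_expR_stretch_le a0 c0 (_ : 0 < y)) _; first lra.
  rewrite ler_wpM2l ?expR_ge0 // lef_pV2 ?posrE ?exprn_gt0 ?ler_sqr ?nnegrE //; lra.
rewrite -mulrA; apply: le_trans step1 _; apply: le_trans step2 _.
by apply: le_trans step3 _; rewrite ler_wpM2l ?mulr_ge0 //; lra.
Qed.

(* [1 + lam * level_mgf_const a c u0] bounds the exponential moment at rate
   [lam <= c / 4] of a variable on the grid [u0 N] (see [level_mgf_le]): the first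
   summand pays for the lowest level, the second for the others, via
   [sum_j 1 / j^2 <= 2]. *)
Definition level_mgf_const a c (u0 : R) :=
  u0 * expR (c * u0 / 4) + 4 * expR (18 / (a ^+ 2 * c)).

Lemma level_mgf_const_ge a c (u0 : R) : 0 <= c -> 0 <= u0 -> u0 <= level_mgf_const a c u0.
Proof.
move=> c0 u0_ge0; rewrite /level_mgf_const.
have : 1 <= expR (c * u0 / 4) by rewrite expR_ge1 ?divr_ge0 ?mulr_ge0.
have := expR_ge0 (18 / (a ^+ 2 * c)); nra.
Qed.

Lemma level_mgf_le a c (u0 : R) lam (J : nat) (p : nat -> R) :
  0 < a -> 0 < c -> 1 <= u0 -> 0 <= lam -> lam <= c / 4 ->
  (forall j, 0 <= p j) -> \sum_(j < J) p j <= 1 ->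
  (forall j, (0 < j < J)%N -> p j <= expR (- (c * (j%:R * u0) `^ a))) ->
  (forall j, (0 < j < J)%N -> lam * (j.+1%:R * u0) <= c / 2 * (j%:R * u0) `^ a) ->
  \sum_(j < J) p j * expR (lam * (j.+1%:R * u0)) <= 1 + lam * level_mgf_const a c u0.
Proof.
move=> a0 c0 u1 lam0 lam_le p0 sum_le1 tail rate.
rewrite (eq_bigr (fun j : 'I_J => p j + p j * (expR (lam * (j.+1%:R * u0)) - 1)));
  last by move=> j _; ring.
rewrite big_split /=; apply: lerD; first exact: sum_le1.
case: J sum_le1 tail rate => [|J] sum_le1 tail rate.
  rewrite big_ord0 mulr_ge0 //; have := level_mgf_const_ge a (ltW c0) (ltW (lt_le_trans ltr01 u1)).
  lra.
rewrite big_ord_recl /level_mgf_const [lam * (_ + _)]mulrDr.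
have p0_le1 : p 0%N <= 1.
  by apply: le_trans sum_le1; rewrite big_ord_recl lerDl sumr_ge0.
apply: lerD.
  have lam_u0 : 0 <= lam * u0 by rewrite mulr_ge0 //; lra.
  have e_ge0 : 0 <= expR (lam * u0) - 1 by rewrite subr_ge0 expR_ge1.
  rewrite /= mul1r; apply: le_trans (ler_wpM2r e_ge0 p0_le1) _.
  rewrite mul1r; apply: le_trans (expR_sub1_le _) _.
  rewrite -mulrA; apply: ler_wpM2l => //; apply: ler_wpM2l; first lra.
  by rewrite ler_expR mulrAC; apply: ler_wpM2r => //; lra.
set C := expR (18 / (a ^+ 2 * c)).
apply: le_trans (_ : _ <= \sum_(i < J) 2 * lam * C / i.+1%:R ^+ 2) _.
  apply: ler_sum => i _; apply: level_mgf_term_le => //.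
  - by apply: tail; rewrite /= ltnS ltn_ord.
  - by apply: rate; rewrite /= ltnS ltn_ord.
rewrite -mulr_sumr (_ : lam * (4 * C) = 2 * lam * C * 2); last by ring.
by apply: ler_wpM2l; [rewrite !mulr_ge0 ?expR_ge0 | exact: sum_inv_sqr_le2].
Qed.

Definition chernoff_rate a c y := c / 4 * y `^ (a - 1).

Lemma chernoff_rate_ge0 a c y : 0 <= c -> 0 <= chernoff_rate a c y.
Proof. by move=> c0; rewrite mulr_ge0 ?powR_ge0 ?divr_ge0. Qed.

Lemma chernoff_rate_le a c y : a <= 1 -> 0 <= c -> 1 <= y -> chernoff_rate a c y <= c / 4.
Proof.
move=> a1 c0 y1; rewrite -[leRHS]mulr1 ler_wpM2l ?divr_ge0 //.
have := @le0_ger_powR _ (a - 1) _ _ ltr01 y1; rewrite powR1; apply; lra.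
Qed.

Lemma chernoff_rate_mulr_le a c y z w : a <= 1 -> 0 <= c -> 0 < z -> z <= y ->
  w <= 2 * z -> chernoff_rate a c y * w <= c / 2 * z `^ a.
Proof.
move=> a1 c0 z0 zy wz; have c4 : 0 <= c / 4 by rewrite divr_ge0.
apply: le_trans (_ : _ <= c / 4 * z `^ (a - 1) * (2 * z)) _.
  apply: le_trans (ler_wpM2l (chernoff_rate_ge0 a y c0) wz) _.
  apply: ler_wpM2r; first lra.
  by apply: ler_wpM2l => //; apply: le0_ger_powR => //; lra.
rewrite -(powRB1_mul a z0); lra.
Qed.

Lemma chernoff_ffun_le (k J : nat) (p : 'I_k -> nat -> R) (v : nat -> R) lam x (M : R) :
  0 <= lam -> (forall i j, 0 <= p i j) ->
  (forall i, \sum_(j < J) p i j * expR (lam * v j) <= M) ->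
  \sum_(f : {ffun 'I_k -> 'I_J} | x < \sum_(i < k) v (f i)) \prod_(i < k) p i (f i)
    <= expR (- (lam * x)) * M ^+ k.
Proof.
move=> lam0 p0 mgf_le.
have pe0 : forall i j, 0 <= p i j * expR (lam * v j).
  by move=> i j; rewrite mulr_ge0 ?expR_ge0.
apply: le_trans (_ : _ <= \sum_(f : {ffun 'I_k -> 'I_J})
   (\prod_(i < k) (p i (f i) * expR (lam * v (f i)))) * expR (- (lam * x))) _.
  rewrite big_mkcond /=; apply: ler_sum => f _; case: ifP => [x_lt|_]; last first.
    by rewrite mulr_ge0 ?expR_ge0 ?prodr_ge0.
  rewrite big_split /= -mulrA -[leLHS]mulr1 ler_wpM2l ?prodr_ge0 //.
  rewrite -expR_sum -expRD -mulr_sumr expR_ge1 //.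
  by rewrite -mulrN -mulrDr mulr_ge0 // subr_ge0 ltW.
rewrite -mulr_suml.
rewrite -(bigA_distr_bigA (fun (i : 'I_k) (j : 'I_J) => p i j * expR (lam * v j))) /=.
rewrite mulrC ler_wpM2l ?expR_ge0 //.
apply: le_trans (_ : _ <= \prod_(i < k) M) _; last by rewrite prodr_const card_ord.
by apply: ler_prod => i _; rewrite sumr_ge0 ?mgf_le.
Qed.

End ExponentialMoments.

Section Levels.
Context d (T : measurableType d) (R : realType) (P : probability T R).

Lemma measure_bigsetU_le (I : Type) (s : seq I) (Pr : pred I) (A : I -> set T) :
  (forall i, measurable (A i)) ->
  (P (\big[setU/set0]_(i <- s | Pr i) A i) <= \sum_(i <- s | Pr i) P (A i))%E.
Proof.
move=> mA; elim: s => [|a s IH]; first by rewrite !big_nil measure0.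
rewrite !big_cons; case: (Pr a) => //.
apply: le_trans (measureU2 _ _ _) _ => //; first exact: bigsetU_measurable.
exact: leeD.
Qed.

Lemma measurable_RV_gt (X : {RV P >-> R}) (t : R) : measurable [set w | t < X w].
Proof.
rewrite (_ : [set w | t < X w] = X @^-1` [set` `]t, +oo[]).
  exact: measurable_funPTI (measurable_itv _).
by apply/seteqP; split => w /=; rewrite in_itv /= andbT.
Qed.

(* [level a j] is the set of reals whose rounding up to a multiple of [a] is
   [a * j.+1]; level [0] also collects everything below [a]. *)
Definition level (a : R) (j : nat) : set R :=
  if j == 0%N then [set` `]-oo, a]] else [set` `]a * j%:R, a * j.+1%:R]].

Lemma level_measurable a j : measurable (level a j).
Proof. by rewrite /level; case: ifP => _; exact: measurable_itv. Qed.

Lemma level_le (a y : R) (j : nat) : level a j y -> y <= a * j.+1%:R.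
Proof.
by rewrite /level; case: ifP => [/eqP -> | _] /=; rewrite in_itv /= ?mulr1 // => /andP[].
Qed.

Lemma level_gt (a y : R) (j : nat) : (0 < j)%N -> level a j y -> a * j%:R < y.
Proof.
by rewrite /level; case: ifP => [/eqP -> //| _] _ /=; rewrite in_itv /= => /andP[].
Qed.

Lemma level_exists (a y : R) (n : nat) : 0 <= a -> (0 < n)%N -> y <= a * n%:R ->
  exists j : 'I_n, level a j y.
Proof.
move=> a0; case: n => [//|n] _; elim: n => [|n IH] y_le.
  by exists ord0; rewrite /level /= in_itv /= -[a]mulr1.
case: (leP y (a * n.+1%:R)) => y_n.
  by have [j hj] := IH y_n; exists (widen_ord (leqnSn _) j).
by exists ord_max; rewrite /level /= in_itv /= y_n y_le.
Qed.

Lemma sum_prob_level (X : {RV P >-> R}) (a : R) (n : nat) : 0 <= a ->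
  (\sum_(j < n.+1) P (X @^-1` level a j) = P (X @^-1` [set` `]-oo, (a * n.+1%:R)%R]]))%E.
Proof.
move=> a0; elim: n => [|n IH]; first by rewrite big_ord1 /level /= mulr1.
rewrite big_ord_recr /= IH /level /= -measureU.
- have a_n : a * n.+1%:R <= a * n.+2%:R by apply: ler_wpM2l => //; rewrite ler_nat.
  congr (P _); apply/seteqP; split => w /=; rewrite !in_itv /=.
  + by case=> [h|/andP[_ h]] //; exact: le_trans h a_n.
  + by move=> h; case: (leP (X w) (a * n.+1%:R)) => h'; [left | right; apply/andP].
- exact: measurable_funPTI (measurable_itv _).
- exact: measurable_funPTI (measurable_itv _).
- apply/seteqP; split => w //=; rewrite !in_itv /= => -[h /andP[h' _]].
  by move: (lt_le_trans h' h); rewrite ltxx.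
Qed.

Lemma sum_prob_level_le1 (X : {RV P >-> R}) (a : R) (n : nat) : 0 <= a ->
  (\sum_(j < n) P (X @^-1` level a j) <= 1)%E.
Proof.
case: n => [|n] a0; first by rewrite big_ord0.
rewrite sum_prob_level //; apply: probability_le1.
exact: measurable_funPTI (measurable_itv _).
Qed.

End Levels.

Section SumDeviation.
Context d (T : measurableType d) (R : realType) (P : probability T R).
Variables (a c u0 s x : R) (k J : nat) (X : 'I_k -> {RV P >-> R}).
Hypotheses (a_gt0 : 0 < a) (a_le1 : a <= 1) (c_gt0 : 0 < c) (u0_ge1 : 1 <= u0).
Hypotheses (s_gt0 : 0 < s) (J_gt0 : (0 < J)%N).
Hypothesis X_indep : mutually_independent P (fun i => (X i : T -> R)).
Hypothesis X_tail : forall i t, u0 <= t ->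
  (P [set w | (t * s < X i w)%R] <= (expR (- (c * t `^ a)))%:E)%E.

Let some_exceeds := \big[setU/set0]_(i < k) [set w | J%:R * u0 * s < X i w].
Let level_event (f : {ffun 'I_k -> 'I_J}) :=
  \bigcap_(i in [set: 'I_k]) X i @^-1` level (u0 * s) (f i).
Let levels_exceed := \big[setU/set0]_(f : {ffun 'I_k -> 'I_J} |
  x < \sum_(i < k) (f i).+1%:R * u0) level_event f.
Let lam := chernoff_rate a c (J%:R * u0).
Let K := level_mgf_const a c u0.

Let u0_gt0 : 0 < u0. Proof. exact: lt_le_trans ltr01 u0_ge1. Qed.
Let us_ge0 : 0 <= u0 * s. Proof. exact: mulr_ge0 (ltW u0_gt0) (ltW s_gt0). Qed.
Let le_mulr_u0 (n : nat) : (0 < n)%N -> u0 <= n%:R * u0.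
Proof. by move=> n0; apply: ler_peMl; [exact: ltW | rewrite ler1n]. Qed.

Lemma level_event_measurable f : measurable (level_event f).
Proof.
apply: fin_bigcap_measurable; first exact: finite_finset.
by move=> i _; exact: measurable_funPTI (level_measurable _ _).
Qed.

Lemma sum_gt_subset :
  [set w | x * s < \sum_(i < k) X i w] `<=` some_exceeds `|` levels_exceed.
Proof.
move=> w /= sum_gt.
case: (pselect (exists i : 'I_k, J%:R * u0 * s < X i w)) => [[i Xi_gt]|none_gt].
  by left; rewrite /some_exceeds -bigcup_seq; exists i => //=; rewrite mem_index_enum.
right.
have X_le i : X i w <= u0 * s * J%:R.
  rewrite leNgt; apply/negP => X_gt; apply: none_gt; exists i.
  by rewrite (_ : J%:R * u0 * s = u0 * s * J%:R) //; ring.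
have [f f_lvl] := fin_all_exists (fun i => level_exists us_ge0 J_gt0 (X_le i)).
rewrite /levels_exceed -bigcup_seq_cond; exists [ffun i => f i]; last first.
  by move=> i _; rewrite /= ffunE; exact: f_lvl.
rewrite /= mem_index_enum /= -(ltr_pM2r s_gt0); apply: lt_le_trans sum_gt _.
rewrite mulr_suml; apply: ler_sum => i _; rewrite ffunE.
rewrite (_ : (f i).+1%:R * u0 * s = u0 * s * (f i).+1%:R); last by ring.
exact: level_le (f_lvl i).
Qed.

Lemma prob_some_exceeds_le :
  (P some_exceeds <= (k%:R * expR (- (c * (J%:R * u0) `^ a)))%:E)%E.
Proof.
apply: le_trans (measure_bigsetU_le _ _ _ (fun i => measurable_RV_gt _ _)) _.
apply: le_trans (_ : _ <= \sum_(i < k) (expR (- (c * (J%:R * u0) `^ a)))%:E)%E _.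
  by apply: lee_sum => i _; apply/X_tail/le_mulr_u0.
by rewrite sumEFin sumr_const card_ord lee_fin [k%:R * _]mulr_natl.
Qed.

Lemma prob_levels_exceed_le :
  (P levels_exceed <= (expR (- (lam * x) + lam * K * k%:R))%:E)%E.
Proof.
pose pn i j := fine (P (X i @^-1` level (u0 * s) j)).
have pnE i j : P (X i @^-1` level (u0 * s) j) = (pn i j)%:E.
  by rewrite fineK //; apply: fin_num_measure; exact: measurable_funPTI (level_measurable _ _).
have pn0 i j : 0 <= pn i j by apply: fine_ge0; exact: measure_ge0.
have lam0 : 0 <= lam := chernoff_rate_ge0 _ _ (ltW c_gt0).
have K0 : 0 <= K.
  exact: le_trans (ltW u0_gt0) (level_mgf_const_ge a (ltW c_gt0) (ltW u0_gt0)).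
apply: le_trans (measure_bigsetU_le _ _ _ level_event_measurable) _.
rewrite (eq_bigr (fun f : {ffun 'I_k -> 'I_J} => (\prod_(i < k) pn i (f i))%:E)); last first.
  move=> f _.
  have := X_indep (fun i => level_measurable (u0 * s) (f i)).
  by rewrite /level_event => ->; rewrite -prodEFin; apply: eq_bigr => i _; exact: pnE.
rewrite sumEFin lee_fin.
apply: le_trans (chernoff_ffun_le (v := fun j => j.+1%:R * u0) (M := 1 + lam * K)
                  x lam0 pn0 _) _.
  move=> i; apply: level_mgf_le => //.
  - by apply: chernoff_rate_le; [| exact: ltW | exact: le_trans u0_ge1 (le_mulr_u0 _)].
  - rewrite -lee_fin -sumEFin; under eq_bigr do rewrite -pnE.
    exact: sum_prob_level_le1.
  - move=> j /andP[j0 _]; rewrite -lee_fin -pnE.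
    apply: le_trans (X_tail i (le_mulr_u0 j0)).
    apply: le_measure; rewrite ?inE; first exact: measurable_funPTI (level_measurable _ _).
      exact: measurable_RV_gt.
    move=> w /(level_gt j0) lvl_gt /=.
    by rewrite (_ : j%:R * u0 * s = u0 * s * j%:R) //; ring.
  - move=> j /andP[j0 jJ]; have j1 : 1 <= j%:R :> R by rewrite ler1n.
    apply: chernoff_rate_mulr_le => //; first exact: ltW.
    + by rewrite mulr_gt0 ?ltr0n.
    + by apply: ler_wpM2r; [exact: ltW | rewrite ler_nat ltnW].
    + by rewrite mulrA; apply: ler_wpM2r; [exact: ltW | rewrite -natr1; lra].
rewrite expRD; apply: ler_wpM2l; first exact: expR_ge0.
rewrite expRM_natr; apply: lerXn2r; rewrite ?nnegrE ?expR_ge0 ?expR_ge1Dx //.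
exact: addr_ge0 ler01 (mulr_ge0 lam0 K0).
Qed.

Lemma prob_sum_gt_le (E : set T) : measurable E ->
  (forall w, E w -> x * s < \sum_(i < k) X i w) ->
  (P E <= (k%:R * expR (- (c * (J%:R * u0) `^ a)) +
           expR (- (lam * x) + lam * K * k%:R))%:E)%E.
Proof.
move=> mE E_sub.
have mA1 : measurable some_exceeds.
  by apply: bigsetU_measurable => i _; exact: measurable_RV_gt.
have mA2 : measurable levels_exceed.
  by apply: bigsetU_measurable => f _; exact: level_event_measurable.
have PE_le : (P E <= P (some_exceeds `|` levels_exceed))%E.
  apply: le_measure; rewrite ?inE //; first exact: measurableU.
  by move=> w /E_sub /sum_gt_subset.
apply: le_trans PE_le _; rewrite EFinD; apply: le_trans (measureU2 _ mA1 mA2) _.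
exact: leeD prob_some_exceeds_le prob_levels_exceed_le.
Qed.

End SumDeviation.

Section ExponentBounds.
Variable R : realType.
Implicit Types a b c x y K : R.

Lemma expR_trunc_le a c x y : 0 < a -> a <= 1 -> 0 < c -> 0 <= x -> x <= 2 * y ->
  expR (- (c * y `^ a)) <= expR (- (c / 8 * x `^ a)).
Proof.
move=> a0 a1 c0 x0 x_le; rewrite ler_expR lerN2.
have x_pow : x `^ a <= 2 * y `^ a.
  apply: le_trans (_ : (2 * y) `^ a <= _).
    by apply: ge0_ler_powR; rewrite ?nnegrE; lra.
  rewrite powRM; [|lra|lra]; apply: ler_wpM2r; first exact: powR_ge0.
  by rewrite -[leRHS](@powRr1 _ 2) ?ler_powR //; lra.
have := powR_ge0 y a; nra.
Qed.

Lemma chernoff_exponent_le a c y x K (k : nat) :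
  0 < a -> a <= 1 -> 0 < c -> 1 <= y -> y <= x -> 0 <= K -> 2 * K * k%:R <= x ->
  - (chernoff_rate a c y * x) + chernoff_rate a c y * K * k%:R <= - (c / 8 * x `^ a).
Proof.
move=> a0 a1 c0 y1 yx K0 Kk_le; set lam := chernoff_rate a c y.
have lam0 : 0 <= lam by apply: chernoff_rate_ge0; lra.
have lam_ge : c / 4 * x `^ (a - 1) <= lam.
  by apply: ler_wpM2l; [lra | apply: le0_ger_powR; lra].
have lamx_ge : c / 4 * x `^ a <= lam * x.
  rewrite -(powRB1_mul a (_ : 0 < x)); last lra.
  by rewrite mulrA; apply: ler_wpM2r => //; lra.
have : lam * (K * k%:R) <= lam * (x / 2) by apply: ler_wpM2l => //; lra.
lra.
Qed.

Lemma deviation_terms_le a c (u0 : R) K x (k J : nat) :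
  0 < a -> a <= 1 -> 0 < c -> 1 <= u0 -> 0 <= K -> (0 < J)%N ->
  J%:R * u0 <= x -> x <= 2 * (J%:R * u0) -> 2 * K * k%:R <= x ->
  k%:R * expR (- (c * (J%:R * u0) `^ a)) +
    expR (- (chernoff_rate a c (J%:R * u0) * x) + chernoff_rate a c (J%:R * u0) * K * k%:R)
  <= (k%:R + 1) * expR (- (c / 8 * x `^ a)).
Proof.
move=> a0 a1 c0 u1 K0 J0 Ju_le x_le Kk_le.
have J1 : 1 <= J%:R :> R by rewrite ler1n.
have Ju1 : 1 <= J%:R * u0 by nra.
rewrite mulrDl mul1r; apply: lerD.
  by apply: ler_wpM2l => //; apply: expR_trunc_le => //; lra.
by rewrite ler_expR; apply: chernoff_exponent_le.
Qed.

(* The threshold makes [ln x <= c / 16 * x^a], via [ln x <= 2 x^(a/2) / a]. *)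
Lemma mul_expR_absorb a c x n : 0 < a -> 0 < c -> 0 < x ->
  (32 / (a * c)) `^ (2 / a) <= x -> n <= x ->
  n * expR (- (c / 8 * x `^ a)) <= expR (- (c / 16 * x `^ a)).
Proof.
move=> a0 c0 x0 x_ge n_le.
set v := x `^ (a / 2).
have v_ge : 32 / (a * c) <= v.
  have h0 : 0 < 32 / (a * c) by rewrite divr_gt0 ?mulr_gt0.
  have e : 2 / a * (a / 2) = 1 by field; exact: lt0r_neq0.
  rewrite -[leLHS](@powRr1 _ (32 / (a * c))); last lra.
  by rewrite -[X in _ `^ X]e powRrM; apply: ge0_ler_powR; rewrite ?nnegrE ?powR_ge0 //; lra.
have ln_le : ln x <= c / 16 * x `^ a.
  apply: le_trans (ln_le_powR (_ : 0 < a / 2) x0) _; first lra.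
  rewrite (powR_half_sqr a (ltW x0)) -/v (_ : v / (a / 2) = 2 / a * v); last first.
    by field; exact: lt0r_neq0.
  rewrite expr2 mulrA; apply: ler_wpM2r; first by apply: powR_ge0.
  rewrite (_ : 2 / a = c / 16 * (32 / (a * c))); last first.
    by field; apply/andP; split; exact: lt0r_neq0.
  by apply: ler_wpM2l => //; lra.
apply: le_trans (_ : x * expR (- (c / 8 * x `^ a)) <= _).
  by apply: ler_wpM2r => //; exact: expR_ge0.
rewrite -[x in x * _]lnK ?posrE // -expRD ler_expR; lra.
Qed.

Lemma powR_three_halves_le a b x y : 0 < a -> 0 < b -> 0 <= x -> 0 <= y ->
  y `^ (3 / 2) <= b * x -> y `^ (3 * a / 2) <= b `^ a * x `^ a.
Proof.
move=> a0 b0 x0 y0 y_le; rewrite (_ : 3 * a / 2 = 3 / 2 * a); last by rewrite mulrAC.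
rewrite powRrM -powRM; [|lra|lra].
by apply: ge0_ler_powR; rewrite ?nnegrE ?powR_ge0 ?mulr_ge0 //; lra.
Qed.

End ExponentBounds.

Section Blocks.
Variable R : realType.
Implicit Types A th x u : R.

Definition block_count A th : nat := Num.truncn ((th / A) `^ (3 / 2)).

Let three_halves_two_thirds : 3 / 2 * (2 / 3) = 1 :> R. Proof. by field. Qed.
Let two_thirds_three_halves : 2 / 3 * (3 / 2) = 1 :> R. Proof. by field. Qed.

Lemma block_count_gt0 A th : 0 < A -> A <= th -> (0 < block_count A th)%N.
Proof.
move=> A0 A_le; have q1 : 1 <= th / A by rewrite ler_pdivlMr // mul1r.
by rewrite truncn_gt0; apply: le_trans q1 (le1r_powR q1 _); lra.
Qed.

Lemma block_count_pow_le A th : 0 < A -> A <= th ->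
  A `^ (3 / 2) * (block_count A th)%:R <= th `^ (3 / 2) < A `^ (3 / 2) * (block_count A th).+1%:R.
Proof.
move=> A0 A_le; have th_eq : th = A * (th / A) by rewrite mulrC divfK ?lt0r_neq0.
rewrite [in th `^ _]th_eq powRM ?divr_ge0; try lra.
apply/andP; split.
  by apply: ler_wpM2l; [exact: powR_ge0 | rewrite truncn_le powR_ge0].
by rewrite ltr_pM2l ?powR_gt0 // truncnS_gt.
Qed.

Lemma mul_block_count_lt A th (r : nat) : 1 <= A -> A <= th -> th < r%:R `^ (2 / 3) ->
  A * (block_count A th)%:R < r%:R.
Proof.
move=> A1 A_le th_lt; have [k_le _] := andP (block_count_pow_le (lt_le_trans ltr01 A1) A_le).
have th_pow : th `^ (3 / 2) < r%:R.
  rewrite -[ltRHS](@powRr1 _ r%:R) // -[X in _ < _ `^ X]two_thirds_three_halves [ltRHS]powRrM.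
  by apply: gt0_ltr_powR; rewrite ?nnegrE ?powR_ge0 //; lra.
apply: le_lt_trans th_pow; apply: le_trans k_le; apply: ler_wpM2r => //.
by apply: le1r_powR => //; lra.
Qed.

Lemma mul_block_count_le A th : 0 < A -> A <= th ->
  A * (block_count A th)%:R <= th * (block_count A th)%:R `^ 3^-1.
Proof.
move=> A0 A_le; set k := block_count A th.
have k_le : k%:R <= (th / A) `^ (3 / 2) by rewrite truncn_le powR_ge0.
have k23_le : k%:R `^ (2 / 3) <= th / A.
  rewrite -[leRHS](@powRr1 _ (th / A)) ?divr_ge0; try lra.
  rewrite -[X in _ <= _ `^ X]three_halves_two_thirds [leRHS]powRrM.
  by apply: ge0_ler_powR; rewrite ?nnegrE ?powR_ge0 //; lra.
have k_split : k%:R `^ (2 / 3) * k%:R `^ 3^-1 = k%:R :> R.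
  rewrite -powRD; last by apply/implyP => _; rewrite pnatr_eq0 -lt0n block_count_gt0.
  by rewrite (_ : 2 / 3 + 3^-1 = 1 :> R) ?powRr1 //; field.
rewrite -[in leLHS]k_split mulrA; apply: ler_wpM2r; first exact: powR_ge0.
by rewrite mulrC -ler_pdivlMr.
Qed.

Lemma pow_le_mul_block_count A th : 1 <= A -> A <= th ->
  th `^ (3 / 2) <= 2 * A `^ 2^-1 * (A * (block_count A th)%:R).
Proof.
move=> A1 A_le; have A0 : 0 < A by lra.
have [_ th_lt] := andP (block_count_pow_le A0 A_le).
have k1 : 1 <= (block_count A th)%:R :> R by rewrite ler1n block_count_gt0.
have A32 : A `^ 2^-1 * A = A `^ (3 / 2).
  rewrite -[X in _ * X = _](@powRr1 _ A) ?(ltW A0) // -powRD.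
    by congr (_ `^ _); field.
  by apply/implyP => _; exact: lt0r_neq0.
rewrite (_ : 2 * _ * (A * _) = A `^ 2^-1 * A * (2 * (block_count A th)%:R)); last by ring.
rewrite A32; apply: (le_trans (ltW th_lt)); apply: ler_wpM2l; first exact: powR_ge0.
by rewrite -natr1; lra.
Qed.

Lemma block_count_admissible A th r0 (r : nat) : 1 <= A -> r0 < A -> A <= th ->
  th < r%:R `^ (2 / 3) ->
  (0 < block_count A th <= r)%N /\ r0 < r%:R / (block_count A th)%:R.
Proof.
move=> A1 r0_lt A_le th_lt; have k0 := block_count_gt0 (lt_le_trans ltr01 A1) A_le.
have Ak_lt := mul_block_count_lt A1 A_le th_lt.
have k1 : 1 <= (block_count A th)%:R :> R by rewrite ler1n.
split; first by rewrite k0 -(ler_nat R); apply: ltW; apply: le_lt_trans Ak_lt; nra.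
by apply: lt_trans r0_lt _; rewrite ltr_pdivlMr; lra.
Qed.

Lemma mul_powR_block (th : R) (r k : nat) : (0 < k)%N ->
  th * k%:R `^ 3^-1 * (r%:R / k%:R) `^ 3^-1 = th * r%:R `^ 3^-1.
Proof.
move=> k0; rewrite -mulrA -powRM ?divr_ge0 //.
by rewrite [k%:R * _]mulrC divfK // pnatr_eq0 -lt0n.
Qed.

Lemma truncn_div_bounds x u : 0 < u -> u <= x ->
  [/\ (0 < Num.truncn (x / u))%N, (Num.truncn (x / u))%:R * u <= x
    & x <= 2 * ((Num.truncn (x / u))%:R * u)].
Proof.
move=> u0 u_le; have xu1 : 1 <= x / u by rewrite ler_pdivlMr // mul1r.
have J1 : 1 <= (Num.truncn (x / u))%:R :> R by rewrite ler1n truncn_gt0.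
split; first by rewrite truncn_gt0.
  by rewrite -ler_pdivlMr // truncn_le; lra.
have := truncnS_gt (x / u); rewrite ltr_pdivrMr // -natr1 => x_lt.
by rewrite mulrA; apply: ltW; apply: lt_le_trans x_lt _; apply: ler_wpM2r; lra.
Qed.

End Blocks.

Section Constants.
Variable R : realType.
Implicit Types a c th : R.

(* [A >= 2 K] keeps the Chernoff penalty [lam K k] below [lam x / 2], and
   [A > r0] keeps the block length [r / k] above [r0]. *)
Definition block_const a c (u0 r0 : R) := 2 * level_mgf_const a c u0 + `|r0| + 1.

Definition theta_min a c (u0 r0 : R) :=
  block_const a c u0 r0 + (32 / (a * c)) `^ (2 / a) + u0 + 2.

Definition rate_const a c (u0 r0 : R) := c / (16 * (2 * block_const a c u0 r0 `^ 2^-1) `^ a).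

Lemma block_const_bounds a c (u0 r0 : R) : 0 <= c -> 0 <= u0 ->
  [/\ 1 <= block_const a c u0 r0, r0 < block_const a c u0 r0
    & 2 * level_mgf_const a c u0 <= block_const a c u0 r0].
Proof.
move=> c0 u0_ge0; have := level_mgf_const_ge a c0 u0_ge0.
have := ler_norm r0; have := normr_ge0 r0; rewrite /block_const; split; lra.
Qed.

Lemma rate_const_gt0 a c (u0 r0 : R) : 0 < c -> 0 <= u0 -> 0 < rate_const a c u0 r0.
Proof.
move=> c0 u0_ge0; have [A1 _ _] := block_const_bounds a r0 (ltW c0) u0_ge0.
by rewrite divr_gt0 ?mulr_gt0 ?powR_gt0 ?mulr_gt0 ?powR_gt0 //; lra.
Qed.

Lemma theta_min_block_bounds a c (u0 r0 : R) th : 0 < a -> 0 < c -> 1 <= u0 ->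
  theta_min a c u0 r0 < th ->
  let A := block_const a c u0 r0 in let x := th * (block_count A th)%:R `^ 3^-1 in
  [/\ 1 <= A, r0 < A, A <= th & th <= x].
Proof.
move=> a0 c0 u1 th_gt A x.
have [A1 r0_lt _] := block_const_bounds a r0 (ltW c0) (ltW (lt_le_trans ltr01 u1)).
rewrite -/A in A1 r0_lt.
have := powR_ge0 (32 / (a * c)) (2 / a); move: th_gt; rewrite /theta_min -/A => th_gt X0.
split => //; first lra.
have k1 : 1 <= (block_count A th)%:R :> R.
  by rewrite ler1n block_count_gt0 //; lra.
have : 1 `^ 3^-1 <= (block_count A th)%:R `^ 3^-1 :> R.
  by apply: ge0_ler_powR; rewrite ?nnegrE ?invr_ge0 //; lra.
have th0 : 0 <= th by lra.
rewrite powR1 /x; nra.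
Qed.

Lemma block_deviation_le a c (u0 r0 : R) th (k J : nat) x :
  0 < a -> a <= 1 -> 0 < c -> 1 <= u0 -> theta_min a c u0 r0 < th ->
  k = block_count (block_const a c u0 r0) th -> x = th * k%:R `^ 3^-1 ->
  J = Num.truncn (x / u0) ->
  k%:R * expR (- (c * (J%:R * u0) `^ a)) +
    expR (- (chernoff_rate a c (J%:R * u0) * x) +
          chernoff_rate a c (J%:R * u0) * level_mgf_const a c u0 * k%:R)
  <= expR (- (rate_const a c u0 r0 * th `^ (3 * a / 2))).
Proof.
move=> a0 a1 c0 u1 th_gt defk defx defJ.
set A := block_const a c u0 r0; set K := level_mgf_const a c u0.
have u0_ge0 : 0 <= u0 by lra.
have [A1 _ A_le th_le] := theta_min_block_bounds a0 c0 u1 th_gt.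
rewrite -/A -defk -defx in A1 A_le th_le.
have X0_le : (32 / (a * c)) `^ (2 / a) <= x.
  by move: th_gt; rewrite /theta_min -/A; lra.
have x_ge : u0 <= x by move: th_gt; rewrite /theta_min -/A; have := powR_ge0 (32 / (a * c)) (2 / a); lra.
have [_ _ KA] := block_const_bounds a r0 (ltW c0) u0_ge0.
have K_ge := level_mgf_const_ge a (ltW c0) u0_ge0.
rewrite -/A -/K in KA K_ge.
have [J0 Ju_le x_le] := truncn_div_bounds (lt_le_trans ltr01 u1) x_ge.
rewrite -defJ in J0 Ju_le x_le.
have Ak_le : A * k%:R <= x.
  by rewrite defx defk; exact: mul_block_count_le (lt_le_trans ltr01 A1) A_le.
have k1 : 1 <= k%:R :> R.
  by rewrite ler1n defk; exact: block_count_gt0 (lt_le_trans ltr01 A1) A_le.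
apply: le_trans (deviation_terms_le a0 a1 c0 u1 (_ : 0 <= K) J0 Ju_le x_le _) _.
- lra.
- by apply: le_trans _ Ak_le; apply: ler_wpM2r => //; lra.
have A2 : 2 <= A by lra.
apply: le_trans (mul_expR_absorb a0 c0 _ X0_le _) _; [lra | nra |].
rewrite ler_expR lerN2 /rate_const.
set D := (2 * A `^ 2^-1) `^ a.
have D0 : 0 < D by rewrite powR_gt0 ?mulr_gt0 ?powR_gt0 //; lra.
have th_pow : th `^ (3 * a / 2) <= D * x `^ a.
  apply: powR_three_halves_le => //; try lra.
    by rewrite mulr_gt0 ?powR_gt0 //; lra.
  apply: le_trans (pow_le_mul_block_count A1 A_le) _.
  by rewrite -defk ler_wpM2l ?mulr_ge0 ?powR_ge0.
apply: le_trans (_ : c / (16 * D) * (D * x `^ a) <= _).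
  by apply: ler_wpM2l => //; rewrite divr_ge0 //; lra.
by rewrite le_eqVlt; apply/orP; left; apply/eqP; field; exact: lt0r_neq0.
Qed.

End Constants.

Theorem proposition2p3 (R : realType) (c alpha theta0 r0 : R) :
  0 < alpha <= 1 -> 0 < c -> 0 <= theta0 ->
  exists theta0' : R, exists c' : R, 0 < c' /\
  forall (d : measure_display) (T : measurableType d) (P : probability T R)
    (Y : nat -> nat -> nat -> {RV P >-> R}) (Yr : nat -> {RV P >-> R}),
    (* independence of {Y^(k)_{r,i} : i in 1..k} for each 1 <= k <= r *)
    (forall r k : nat, (0 < k <= r)%N ->
       mutually_independent P (fun i : 'I_k => (Y r k i : T -> R))) ->
    (* uniform stretched-exponential tail bound *)
    (forall (r k i : nat) (theta : R), (0 < k <= r)%N -> (i < k)%N ->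
       r0 < r%:R / k%:R -> theta0 < theta ->
       (P [set w | (Y r k i w > theta * (r%:R / k%:R) `^ (3^-1))%R]
         <= (expR (- (c * theta `^ alpha)))%:E)%E) ->
    (* domination of Y_r by the sums *)
    (forall (r k : nat), (0 < k <= r)%N -> r0 < r%:R / k%:R ->
       forall w, Yr r w <= \sum_(i < k) Y r k i w) ->
    forall (r : nat) (theta : R), r0 < r%:R ->
      theta0' < theta -> theta < r%:R `^ (2 / 3) ->
      (P [set w | (Yr r w > theta * r%:R `^ (3^-1))%R]
        <= (expR (- (c' * theta `^ (3 * alpha / 2))))%:E)%E.
Proof.
move=> /andP[a0 a1] c0 theta0_ge0; set u0 := theta0 + 1.
have u1 : 1 <= u0 by rewrite /u0; lra.
exists (theta_min alpha c u0 r0), (rate_const alpha c u0 r0); split.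
  by apply: rate_const_gt0; lra.
move=> d T P Y Yr indep tail dom r th _ th_gt th_lt.
have [A1 r0_lt A_le th_le] := theta_min_block_bounds a0 c0 u1 th_gt.
have [k_adm r0_lt_rk] := block_count_admissible A1 r0_lt A_le th_lt.
set k := block_count _ th in k_adm r0_lt_rk th_le.
set x := th * k%:R `^ 3^-1 in th_le.
have [k0 k_le] := andP k_adm.
have u0_le : u0 <= x.
  by move: th_gt; rewrite /theta_min; have := powR_ge0 (32 / (alpha * c)) (2 / alpha); lra.
have [J0 _ _] := truncn_div_bounds (lt_le_trans ltr01 u1) u0_le.
apply: le_trans (prob_sum_gt_le (s := (r%:R / k%:R) `^ 3^-1) (x := x) a0 a1 c0 u1 _ J0
  (indep r k k_adm) _ (measurable_RV_gt (Yr r) _) _) _.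
- by apply/powR_gt0/divr_gt0; rewrite ltr0n //; exact: leq_trans k0 k_le.
- move=> i t t_ge; apply: tail => //; rewrite /u0 in t_ge; lra.
- move=> w /= Yr_gt; rewrite mul_powR_block //.
  exact: lt_le_trans Yr_gt (dom r k k_adm r0_lt_rk w).
- by rewrite lee_fin; exact: block_deviation_le.
Qed.
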